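(* Let $\nu$ be a positive continuous radial function on $\mathbb{D}$, and let $X$ be a Banach space of analytic functions on $\mathbb{D}$ in which the set of polynomials is dense. Let $\varphi, \psi$ be analytic self-maps of $\mathbb{D}$ such that $C_{\varphi} - C_{\psi} : X \to \mathcal{B}_{\nu}$ is bounded. Then the following are equivalent: (a) $C_{\varphi} - C_{\psi}$ is a bounded operator from $X$ into $\mathcal{B}_{\nu,0}$; (b) $\varphi - \psi \in \mathcal{B}_{\nu,0}$ and $\varphi^{2} - \psi^{2} \in \mathcal{B}_{\nu,0}$; (c) $\varphi - \psi \in \mathcal{B}_{\nu,0}$ and $\displaystyle\lim_{|z|\to 1^{-}} \nu(z)|\varphi(z)-\psi(z)|\max\{|\varphi'(z)|, |\psi'(z)|\} = 0$.
   Context: $\mathbb{D}$ is the open unit disk and $H(\mathbb{D})$ the analytic functions on $\mathbb{D}$. For a positive continuous radial function $\nu$ on $\mathbb{D}$ (radial: $\nu(z)=\nu(|z|)$), the Bloch type space $\mathcal{B}_{\nu}$ consists of $f\in H(\mathbb{D})$ with $\sup_{z\in\mathbb{D}}\nu(z)|f'(z)|<\infty$ (normed by $|f(0)|+\sup_{z}\nu(z)|f'(z)|$), and $\mathcal{B}_{\nu,0}$ is the closed subspace of $f\in\mathcal{B}_\nu$ with $\nu(z)|f'(z)|\to 0$ as $|z|\to1^-$. For an analytic self-map $\varphi$ of $\mathbb{D}$, $C_\varphi f = f\circ\varphi$. *)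

(* The complex plane is R[i] for an
   arbitrary R : realType (i.e. the complex numbers), viewed as a normed field
   over itself, so that [derivable f z 1] / [derive1 f z] are complex
   derivatives. *)
From HB Require Import structures.
From mathcomp Require Import all_boot all_order all_algebra.
From mathcomp Require Import all_classical all_reals all_analysis.
From mathcomp Require Import complex.
Import Order.TTheory GRing.Theory Num.Theory.
Import numFieldNormedType.Exports.

Set Implicit Arguments.
Unset Strict Implicit.
Unset Printing Implicit Defensive.

Local Open Scope classical_set_scope.
Local Open Scope ring_scope.

Definition Cplx (R : realType) : numClosedFieldType := R[i].

Section Defs.
Variable R : realType.
Local Notation C := (Cplx R).

Definition disk : set C := [set z : C | `|z| < 1].

Definition holo (f : C -> C) : Prop := forall z : C, `|z| < 1 -> derivable f z 1.

Definition self_map (phi : C -> C) : Prop :=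
  holo phi /\ forall z : C, `|z| < 1 -> `|phi z| < 1.

Definition weight (nu : C -> C) : Prop :=
  [/\ forall z : C, `|z| < 1 -> 0 < nu z,
      {within disk, continuous nu} &
      forall z : C, `|z| < 1 -> nu z = nu `|z| ].

Definition vanishes_at_boundary (F : C -> C) : Prop :=
  forall e : C, 0 < e -> exists r : C, r < 1 /\
    forall z : C, r < `|z| < 1 -> `|F z| < e.

Definition bloch (nu : C -> C) (f : C -> C) : Prop :=
  holo f /\ exists M : C, forall z : C, `|z| < 1 -> nu z * `|derive1 f z| <= M.

Definition little_bloch (nu : C -> C) (f : C -> C) : Prop :=
  bloch nu f /\ vanishes_at_boundary (fun z => nu z * `|derive1 f z|).

(* ||f||_{B_nu} = |f(0)| + sup_{z in D} nu(z)|f'(z)| <= c  (exact unfolding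
   of "the sup is <= c - |f 0|") *)
Definition bloch_norm_le (nu : C -> C) (f : C -> C) (c : C) : Prop :=
  forall z : C, `|z| < 1 -> `|f 0| + nu z * `|derive1 f z| <= c.

(* X is a Banach space of analytic functions on D: a complete normed C-space V
   together with a linear injective realisation J of its elements as analytic
   functions on D. *)
Definition banach_space_of_analytic (V : completeNormedModType C)
    (J : V -> C -> C) : Prop :=
  [/\ forall (a : C) (u v : V) (z : C), J (a *: u + v) z = a * J u z + J v z,
      forall (u v : V), (forall z : C, `|z| < 1 -> J u z = J v z) -> u = v &
      forall v : V, holo (J v) ].

Definition is_poly_in (V : completeNormedModType C) (J : V -> C -> C)
    (w : V) (p : {poly C}) : Prop :=
  forall z : C, `|z| < 1 -> J w z = p.[z].

Definition polys_dense (V : completeNormedModType C) (J : V -> C -> C) : Prop :=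
  (forall p : {poly C}, exists w : V, is_poly_in J w p) /\
  (forall (v : V) (e : C), 0 < e ->
     exists (p : {poly C}) (w : V), is_poly_in J w p /\ `|v - w| < e).

Definition cdiff (V : completeNormedModType C) (J : V -> C -> C)
    (phi psi : C -> C) (v : V) : C -> C :=
  fun z => J v (phi z) - J v (psi z).

Definition bounded_into_bloch (nu : C -> C) (V : completeNormedModType C)
    (T : V -> C -> C) : Prop :=
  (forall v : V, bloch nu (T v)) /\
  exists M : C, forall v : V, bloch_norm_le nu (T v) (M * `|v|).

Definition bounded_into_little_bloch (nu : C -> C) (V : completeNormedModType C)
    (T : V -> C -> C) : Prop :=
  (forall v : V, little_bloch nu (T v)) /\
  exists M : C, forall v : V, bloch_norm_le nu (T v) (M * `|v|).

End Defs.

From HB Require Import structures.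
From mathcomp Require Import all_boot all_order all_algebra.
From mathcomp Require Import all_classical all_reals all_analysis.
From mathcomp Require Import complex.
From mathcomp Require Import ring.
Import Order.TTheory GRing.Theory Num.Theory.
Import numFieldNormedType.Exports.
Local Open Scope classical_set_scope.
Local Open Scope ring_scope.

(* (a) => (b): apply C_phi - C_psi to z and z^2.
   (b) => (c): for |a|, |b| <= 1 one has
   |a - b| max(|u|, |v|) <= |a u - b v| + |u - v|, since (a - b) u and
   (a - b) v are (a u - b v) - b (u - v) and (a u - b v) - a (u - v); take
   a, b = phi, psi and u, v = phi', psi', and note that
   (phi^2 - psi^2)' = 2 (phi phi' - psi psi').
   (c) => (a): for a polynomial p,
   (p o phi - p o psi)' = p'(phi) phi' - p'(psi) psi', and p' is bounded and
   Lipschitz on the closed disk, so nu |(p o phi - p o psi)'| is dominated by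
   the two vanishing quantities of (c).  Polynomials are dense in X and
   C_phi - C_psi is bounded into B_nu, so the vanishing passes to all of X. *)

Section Derivatives.
Context {R : realType}.
Local Notation C := (Cplx R).

Lemma nbhs_disk {z : C} : `|z| < 1 -> nbhs z (@disk R).
Proof.
have : open (ball (0 : C) 1) := ball_open 0 1.
rewrite openE => /(_ z); rewrite /ball /= sub0r normrN => /[apply].
by apply: filterS => x; rewrite /ball /= sub0r normrN.
Qed.

Lemma is_derive_eq_on_disk {f g : C -> C} {z df : C} : `|z| < 1 ->
  (forall x, `|x| < 1 -> f x = g x) -> is_derive z 1 f df -> is_derive z 1 g df.
Proof.
move=> z1 fg; apply: near_eq_is_derive.
exact: filterS fg (nbhs_disk z1).
Qed.

Lemma is_derive_horner_comp (p : {poly C}) (f : C -> C) (z df : C) :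
  is_derive z 1 f df -> is_derive z 1 (fun x => p.[f x]) (p^`().[f z] * df).
Proof.
move=> f_df; elim/poly_ind: p => [|p c p_df].
  have -> : (fun x => (0 : {poly C}).[f x]) = cst 0.
    by apply/funext => x; rewrite horner0.
  by rewrite deriv0 horner0 mul0r; exact: is_derive_cst.
have -> : (fun x => (p * 'X + c%:P).[f x]) = (fun x => p.[f x]) * f + cst c.
  by apply/funext => x; rewrite !hornerE.
apply: is_derive_eq; rewrite derivMXaddC !hornerE /=.
by rewrite /GRing.scale /=; ring.
Qed.

Lemma derive1_val {f : C -> C} {z df : C} :
  is_derive z 1 f df -> derive1 f z = df.
Proof. by move=> f_df; rewrite derive1E derive_val. Qed.

Lemma horner_bounded_lipschitz (p : {poly C}) : exists K : C,
  forall a b : C, `|a| <= 1 -> `|b| <= 1 ->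
    `|p.[a]| <= K /\ `|p.[a] - p.[b]| <= K * `|a - b|.
Proof.
elim/poly_ind: p => [|p c [K pK]].
  by exists 0 => a b _ _; rewrite !horner0 subr0 normr0 mul0r.
have K_ge0 : 0 <= K.
  have := pK 0 0; rewrite normr0 ler01 => /(_ isT isT) [pK0 _].
  exact: le_trans (normr_ge0 _) pK0.
exists (K + K + `|c|) => a b a1 b1; have [pa_le pab_le] := pK a b a1 b1.
have pa_mul_le : `|p.[a] * a| <= K by rewrite normrM -[K]mulr1 ler_pM.
rewrite !hornerE; split.
  by rewrite (le_trans (ler_normD _ _)) // lerD2r (le_trans pa_mul_le) // lerDl.
have -> : p.[a] * a + c - (p.[b] * b + c) =
    p.[a] * (a - b) + (p.[a] - p.[b]) * b by ring.
rewrite (le_trans (ler_normD _ _)) //.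
rewrite (@le_trans _ _ (K * `|a - b| + K * `|a - b|)) //.
  by rewrite !normrM lerD ?ler_wpM2r // -[X in _ <= X]mulr1 ler_pM.
by rewrite -mulrDl ler_wpM2r // lerDl.
Qed.

End Derivatives.

Section Vanishing.
Context {R : realType}.
Local Notation C := (Cplx R).

Lemma eq_vanishes_at_boundary {F G : C -> C} :
  (forall z, `|z| < 1 -> F z = G z) ->
  vanishes_at_boundary F -> vanishes_at_boundary G.
Proof.
move=> FG vF e /vF[r [r1 rF]]; exists r; split=> // z /[dup] /andP[_ z1] rz.
by rewrite -FG // rF.
Qed.

Lemma vanishes_at_boundary_le {F G : C -> C} : vanishes_at_boundary G ->
  (forall z, `|z| < 1 -> 0 <= F z <= G z) -> vanishes_at_boundary F.
Proof.
move=> vG FG e /vG[r [r1 rG]]; exists r; split=> // z /[dup] /andP[_ z1] rz.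
have /andP[F_ge0 FG_le] := FG z z1.
rewrite ger0_norm // (le_lt_trans FG_le) // -[G z]ger0_norm ?rG //.
exact: le_trans FG_le.
Qed.

Lemma vanishes_at_boundaryD {F G : C -> C} :
  vanishes_at_boundary F -> vanishes_at_boundary G ->
  vanishes_at_boundary (fun z => F z + G z).
Proof.
move=> vF vG e e_gt0; have e2_gt0 : 0 < e / 2 by rewrite divr_gt0.
have [r1 [r1_lt1 r1F]] := vF _ e2_gt0; have [r2 [r2_lt1 r2G]] := vG _ e2_gt0.
have r_real r : r < 1 -> r \is Num.real.
  by move=> /ltW/ler_real->; rewrite rpred1.
have r1r2 : r1 >=< r2 by rewrite real_comparable ?r_real.
exists (Num.max r1 r2); rewrite comparable_gt_max // r1_lt1 r2_lt1.
split=> // z.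
rewrite comparable_gt_max // => /andP[/andP[r1z r2z] z1].
by rewrite (splitr e) (le_lt_trans (ler_normD _ _)) // ltrD ?r1F ?r2G ?r1z ?r2z.
Qed.

Lemma vanishes_at_boundaryMl (k : C) {F : C -> C} : vanishes_at_boundary F ->
  vanishes_at_boundary (fun z => k * F z).
Proof.
move=> vF e e_gt0; have k1_gt0 : 0 < `|k| + 1 by rewrite ltr_pwDr.
have [r [r1 rF]] := vF _ (divr_gt0 e_gt0 k1_gt0).
exists r; split=> // z /rF Fz; rewrite normrM.
rewrite (@le_lt_trans _ _ ((`|k| + 1) * `|F z|)) ?ler_wpM2r ?lerDl //.
by rewrite -ltr_pdivlMl // mulrC.
Qed.

End Vanishing.

Section Inequalities.
Context {K : numDomainType}.
Implicit Types a b u v k l : K.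

Lemma normB_mul_le a b u v k l : `|a| <= k -> `|a - b| <= l ->
  `|a * u - b * v| <= k * `|u - v| + l * Num.max `|u| `|v|.
Proof.
move=> ak abl; have -> : a * u - b * v = a * (u - v) + (a - b) * v by ring.
rewrite (le_trans (ler_normD _ _)) // !normrM lerD ?ler_wpM2r //.
by rewrite ler_pM // comparable_le_max ?real_comparable // lexx orbT.
Qed.

Lemma normB_mul_max_le a b u v : `|a| <= 1 -> `|b| <= 1 ->
  `|a - b| * Num.max `|u| `|v| <= `|a * u - b * v| + `|u - v|.
Proof.
move=> a1 b1.
have bound c w : `|c| <= 1 -> (a - b) * w = a * u - b * v - c * (u - v) ->
    `|a - b| * `|w| <= `|a * u - b * v| + `|u - v|.
  move=> c1 abw; rewrite -normrM abw (le_trans (ler_normB _ _)) //.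
  by rewrite lerD2l normrM ler_piMl.
rewrite maxr_pMr // comparable_ge_max ?real_comparable ?ger0_real //.
by rewrite (bound b u) ?(bound a v) //; ring.
Qed.

End Inequalities.

Section LittleBloch.
Context {R : realType} {nu : Cplx R -> Cplx R}.
Local Notation C := (Cplx R).

Lemma little_bloch_eq_on_disk {f g : C -> C} : little_bloch nu f ->
  (forall z, `|z| < 1 -> f z = g z) -> little_bloch nu g.
Proof.
move=> [[f_holo [M fM]] f_vanish] fg.
have g_df (z : C) : `|z| < 1 -> is_derive z 1 g (derive1 f z).
  move=> z1; rewrite derive1E.
  exact: is_derive_eq_on_disk z1 fg (derivableP (f_holo z z1)).
have dfg (z : C) : `|z| < 1 -> derive1 g z = derive1 f z.
  by move=> z1; exact/derive1_val/g_df.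
split; [split|].
- by move=> z z1; case: (g_df z z1).
- by exists M => z z1; rewrite dfg ?fM.
- by apply: eq_vanishes_at_boundary f_vanish => z z1; rewrite dfg.
Qed.

Hypothesis nu_ge0 : forall z : C, `|z| < 1 -> 0 <= nu z.

Section SelfMaps.
Context {phi psi : C -> C} (phi_self : self_map phi) (psi_self : self_map psi).

Lemma is_derive_diff {z : C} : `|z| < 1 ->
  is_derive z 1 (fun x => phi x - psi x) (derive1 phi z - derive1 psi z).
Proof.
move=> z1; rewrite !derive1E.
apply: is_deriveB; apply: derivableP.
  exact: phi_self.1.
exact: psi_self.1.
Qed.

Lemma is_derive_horner_compB (p : {poly C}) {z : C} : `|z| < 1 ->
  is_derive z 1 (fun x => p.[phi x] - p.[psi x])
    (p^`().[phi z] * derive1 phi z - p^`().[psi z] * derive1 psi z).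
Proof.
move=> z1; rewrite !derive1E.
apply: is_deriveB; apply: is_derive_horner_comp; apply: derivableP.
  exact: phi_self.1.
exact: psi_self.1.
Qed.

Lemma vanishes_dist_max_deriv :
  vanishes_at_boundary
    (fun z => nu z * `|derive1 (fun z => phi z - psi z) z|) ->
  vanishes_at_boundary
    (fun z => nu z * `|derive1 (fun z => phi z ^+ 2 - psi z ^+ 2) z|) ->
  vanishes_at_boundary (fun z => nu z * `|phi z - psi z| *
    Num.max `|derive1 phi z| `|derive1 psi z|).
Proof.
have -> : (fun z => phi z ^+ 2 - psi z ^+ 2) =
    (fun z => ('X^2).[phi z] - ('X^2).[psi z]).
  by apply/funext => z; rewrite !hornerXn.
move=> vanish1 vanish2.
apply: vanishes_at_boundary_le (vanishes_at_boundaryD vanish2 vanish1) _.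
move=> z z1.
rewrite (derive1_val (is_derive_diff z1)).
rewrite (derive1_val (is_derive_horner_compB _ z1)) derivXn !hornerE /=.
have [phi1 psi1] := (ltW (phi_self.2 z z1), ltW (psi_self.2 z z1)).
apply/andP; split.
  by rewrite mulr_ge0 // mulr_ge0 ?nu_ge0.
rewrite -mulrA -mulrDr ler_wpM2l ?nu_ge0 //.
rewrite (le_trans (normB_mul_max_le _ _ _ _ phi1 psi1)) // lerD2r.
have -> : (phi z + phi z) * derive1 phi z - (psi z + psi z) * derive1 psi z =
    (phi z * derive1 phi z - psi z * derive1 psi z) *+ 2.
  by rewrite !mulrDl opprD addrACA mulr2n.
by rewrite normrMn mulr2n lerDl.
Qed.

Lemma vanishes_deriv_horner_compB (p : {poly C}) :
  vanishes_at_boundary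
    (fun z => nu z * `|derive1 (fun z => phi z - psi z) z|) ->
  vanishes_at_boundary (fun z => nu z * `|phi z - psi z| *
    Num.max `|derive1 phi z| `|derive1 psi z|) ->
  vanishes_at_boundary
    (fun z => nu z * `|derive1 (fun x => p.[phi x] - p.[psi x]) z|).
Proof.
have [k p'k] := horner_bounded_lipschitz p^`().
move=> vanish1 vanish2.
apply: vanishes_at_boundary_le (vanishes_at_boundaryD
  (vanishes_at_boundaryMl k vanish1) (vanishes_at_boundaryMl k vanish2)) _.
move=> z z1; have [phi1 psi1] := (ltW (phi_self.2 z z1), ltW (psi_self.2 z z1)).
have [p'k_le p'kB_le] := p'k _ _ phi1 psi1.
rewrite (derive1_val (is_derive_diff z1)).
rewrite (derive1_val (is_derive_horner_compB _ z1)).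
rewrite mulr_ge0 ?nu_ge0 //= -[nu z * _ * _]mulrA !(mulrCA k) -mulrDr.
by rewrite ler_wpM2l ?nu_ge0 // mulrA [_ * k]mulrC normB_mul_le.
Qed.

Context {V : completeNormedModType C} {J : V -> C -> C}.

Lemma cdiff_poly {w : V} {p : {poly C}} : is_poly_in J w p ->
  forall z, `|z| < 1 -> cdiff J phi psi w z = p.[phi z] - p.[psi z].
Proof. by move=> wp z z1; rewrite /cdiff !wp ?phi_self.2 ?psi_self.2. Qed.

Lemma cdiffD : banach_space_of_analytic J -> forall u v : V,
  cdiff J phi psi (u + v) = cdiff J phi psi u + cdiff J phi psi v.
Proof.
move=> [J_lin _ _] u v; have J_add x : J (u + v) x = J u x + J v x.
  by rewrite -[in LHS](scale1r u) J_lin mul1r.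
by apply/funext => z; rewrite /cdiff !J_add /= opprD addrACA.
Qed.

Lemma vanishes_deriv_cdiff_poly {w : V} {p : {poly C}} : is_poly_in J w p ->
  vanishes_at_boundary
    (fun z => nu z * `|derive1 (fun z => phi z - psi z) z|) ->
  vanishes_at_boundary (fun z => nu z * `|phi z - psi z| *
    Num.max `|derive1 phi z| `|derive1 psi z|) ->
  vanishes_at_boundary (fun z => nu z * `|derive1 (cdiff J phi psi w) z|).
Proof.
move=> wp vanish1 vanish2.
apply: eq_vanishes_at_boundary (vanishes_deriv_horner_compB p vanish1 vanish2).
move=> z z1.
have horner_cdiff x : `|x| < 1 -> p.[phi x] - p.[psi x] = cdiff J phi psi w x.
  by move=> x1; rewrite (cdiff_poly wp).
have p_df := is_derive_horner_compB p z1.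
rewrite (derive1_val p_df).
by rewrite (derive1_val (is_derive_eq_on_disk z1 horner_cdiff p_df)).
Qed.

End SelfMaps.
End LittleBloch.

Section Density.
Context {R : realType}.
Local Notation C := (Cplx R).
Context {nu : C -> C} {V : normedModType C} {T : V -> C -> C} {M : C}.
Hypotheses (nu_ge0 : forall z : C, `|z| < 1 -> 0 <= nu z)
  (TD : forall u v : V, T (u + v) = T u + T v)
  (T_holo : forall v : V, holo (T v))
  (T_bounded : forall v : V, bloch_norm_le nu (T v) (M * `|v|)).

Lemma vanishes_deriv_of_dense (D : set V) :
  (forall (v : V) (e : C), 0 < e -> exists2 w, D w & `|v - w| < e) ->
  (forall w, D w ->
    vanishes_at_boundary (fun z => nu z * `|derive1 (T w) z|)) ->
  forall v, vanishes_at_boundary (fun z => nu z * `|derive1 (T v) z|).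
Proof.
move=> D_dense D_vanish v e e_gt0; have e2_gt0 : 0 < e / 2 by rewrite divr_gt0.
have M1_gt0 : 0 < `|M| + 1 by rewrite ltr_pwDr.
have [w Dw vw] := D_dense v _ (divr_gt0 e2_gt0 M1_gt0).
have [r [r1 rw]] := D_vanish w Dw _ e2_gt0.
exists r; split=> // z /[dup] /andP[_ z1] rz.
have dTv : derive1 (T v) z = derive1 (T (v - w)) z + derive1 (T w) z.
  have -> : T v = T (v - w) + T w by rewrite -TD subrK.
  rewrite !derive1E deriveD //; exact: T_holo _ _ z1.
have le_M : nu z * `|derive1 (T (v - w)) z| <= M * `|v - w|.
  by apply: le_trans (T_bounded (v - w) z z1); rewrite lerDr.
have M_ge0 : 0 <= M * `|v - w| by rewrite (le_trans _ le_M) ?mulr_ge0 ?nu_ge0.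
have small_vw : nu z * `|derive1 (T (v - w)) z| < e / 2.
  rewrite (le_lt_trans le_M) // -(ger0_norm M_ge0) normrM normr_id.
  rewrite (@le_lt_trans _ _ ((`|M| + 1) * `|v - w|)) ?ler_wpM2r ?lerDl //.
  by rewrite -ltr_pdivlMl // mulrC.
have small_w : nu z * `|derive1 (T w) z| < e / 2.
  by have := rw z rz; rewrite ger0_norm ?mulr_ge0 ?nu_ge0.
rewrite ger0_norm ?mulr_ge0 ?nu_ge0 // dTv (splitr e).
apply: le_lt_trans (ltrD small_vw small_w).
by rewrite -mulrDr ler_wpM2l ?nu_ge0 // ler_normD.
Qed.

End Density.

Theorem theorem3p1 (R : realType) (nu : Cplx R -> Cplx R)
  (V : completeNormedModType (Cplx R)) (J : V -> Cplx R -> Cplx R)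
  (phi psi : Cplx R -> Cplx R) :
  weight nu ->
  banach_space_of_analytic J ->
  polys_dense J ->
  self_map phi -> self_map psi ->
  bounded_into_bloch nu (cdiff J phi psi) ->
  [<-> bounded_into_little_bloch nu (cdiff J phi psi);
       little_bloch nu (fun z => phi z - psi z) /\
       little_bloch nu (fun z => phi z ^+ 2 - psi z ^+ 2);
       little_bloch nu (fun z => phi z - psi z) /\
       vanishes_at_boundary (fun z => nu z * `|phi z - psi z| *
          Num.max `|derive1 phi z| `|derive1 psi z|)].
Proof.
move=> [nu_gt0 _ _] J_banach [J_poly J_dense] phi_self psi_self.
move=> [T_bloch [M T_le]].
have nu_ge0 z : `|z| < 1 -> 0 <= nu z by move=> z1; exact/ltW/nu_gt0.
have [wX wX_p] := J_poly 'X; have [wX2 wX2_p] := J_poly ('X^2).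
tfae.
- move=> [T_little _]; split.
    apply: little_bloch_eq_on_disk (T_little wX) _ => z z1.
    by rewrite (cdiff_poly phi_self psi_self wX_p) // !hornerX.
  apply: little_bloch_eq_on_disk (T_little wX2) _ => z z1.
  by rewrite (cdiff_poly phi_self psi_self wX2_p) // !hornerXn.
- move=> [[phi_psi_bloch vanish1] [_ vanish2]]; split; first by split.
  exact (vanishes_dist_max_deriv nu_ge0 phi_self psi_self vanish1 vanish2).
- move=> [[_ vanish1] vanish2]; split; last by exists M.
  move=> v; split; first exact: T_bloch.
  apply: (vanishes_deriv_of_dense nu_ge0 (cdiffD J_banach)
    (fun u => (T_bloch u).1) T_le [set w | exists p, is_poly_in J w p]).
    move=> u e /(J_dense u)[p [w [wp uw]]].
    by exists w => //; exists p.
  move=> w [p wp].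
  exact (vanishes_deriv_cdiff_poly nu_ge0 phi_self psi_self wp vanish1 vanish2).
Qed.
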